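(* In the $\ell^2$ linear social choice setting, random dictatorship has worst-case distortion $\Omega(d)$.
   Context: Setting ($\ell^2$ linear social choice). Fix a dimension $d$. An instance consists of $n$ voters and $m$ candidates, each a vector in $\mathbb{R}^d_{\ge 0}$ with Euclidean norm $1$, with every voter vector in $\mathrm{Cone}(C)$ (nonnegative linear combinations of the candidate vectors $C$). Utility $u_v(c)=v^\top c$; each voter reports a ranking of $C$ consistent with its utilities (ties broken arbitrarily). $\mathrm{UW}(c)=\sum_v u_v(c)$. Distortion of a randomized rule on an instance: $\max_c\mathrm{UW}(c)/\mathbb{E}_{c\sim f}[\mathrm{UW}(c)]$; worst-case distortion is the supremum over instances, as a function of $d$. Random dictatorship: pick a voter uniformly at random and output its top-ranked candidate. *)

From HB Require Import structures.
From mathcomp Require Import all_boot all_order all_algebra all_fingroup.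
From mathcomp Require Import reals.
Set Implicit Arguments. Unset Strict Implicit. Unset Printing Implicit Defensive.
Import Order.TTheory GRing.Theory Num.Theory.
Local Open Scope ring_scope.

Section LSC.
Variable R : realType.
Variable d : nat.

Definition vec := 'I_d -> R.

Definition dot (x y : vec) : R := \sum_(i < d) x i * y i.

Definition nonneg_unit (x : vec) : Prop :=
  (forall i, 0 <= x i) /\ dot x x = 1.

Definition in_cone (m : nat) (C : 'I_m -> vec) (x : vec) : Prop :=
  exists lam : 'I_m -> R, (forall j, 0 <= lam j) /\
    forall i, x i = \sum_(j < m) lam j * C j i.

(* Instance with n.+1 voters and m.+1 candidates. A ranking of a voter is a
   permutation sending each candidate to its position (0 = top). *)
Definition valid_instance (n m : nat) (V : 'I_n.+1 -> vec) (C : 'I_m.+1 -> vec)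
  (rk : 'I_n.+1 -> {perm 'I_m.+1}) : Prop :=
  (forall v, nonneg_unit (V v)) /\ (forall c, nonneg_unit (C c)) /\
  (forall v, in_cone C (V v)) /\
  (forall v c c', (rk v c < rk v c')%N -> dot (V v) (C c') <= dot (V v) (C c))
.

Definition UW (n m : nat) (V : 'I_n.+1 -> vec) (C : 'I_m.+1 -> vec) (c : 'I_m.+1) : R :=
  \sum_(v < n.+1) dot (V v) (C c).

Definition top (n m : nat) (rk : 'I_n.+1 -> {perm 'I_m.+1}) (v : 'I_n.+1) : 'I_m.+1 :=
  (rk v)^-1%g ord0.

Definition RD_welfare (n m : nat) (V : 'I_n.+1 -> vec) (C : 'I_m.+1 -> vec)
  (rk : 'I_n.+1 -> {perm 'I_m.+1}) : R :=
  (\sum_(v < n.+1) UW V C (top rk v)) / n.+1%:R.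

Definition RD_distortion (n m : nat) (V : 'I_n.+1 -> vec) (C : 'I_m.+1 -> vec)
  (rk : 'I_n.+1 -> {perm 'I_m.+1}) : R :=
  (\big[Num.max/0]_(c < m.+1) UW V C c) / RD_welfare V C rk.

End LSC.

From mathcomp Require Import all_boot all_order all_algebra all_fingroup.
From mathcomp Require Import reals ring lra.
Import Order.TTheory GRing.Theory Num.Theory.
Set Implicit Arguments. Unset Strict Implicit. Unset Printing Implicit Defensive.
Local Open Scope ring_scope.

(* Take the standard basis e_0, ..., e_(n+1) of R^(n+2) as candidates and
   n + 1 voters, voter v sitting at 3/5 e_0 + 4/5 e_(v+1).  Every voter puts
   its own axis e_(v+1) first, which only it values (welfare 4/5), so random
   dictatorship earns 4/5, while the common second choice e_0 has welfare
   3(n+1)/5: the distortion is at least 3(n+1)/4 >= d/4. *)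

Section Basis.
Variables (R : realType) (d : nat).

Definition basis_vec (j : 'I_d) : vec R d := fun i => (i == j)%:R.

Lemma sum_mul_delta (f : 'I_d -> R) (j : 'I_d) :
  \sum_(i < d) f i * (i == j)%:R = f j.
Proof.
rewrite (bigD1 j) //= eqxx mulr1 big1 ?addr0 // => i /negbTE ->.
by rewrite mulr0.
Qed.

Lemma dot_basisr (x : vec R d) (j : 'I_d) : dot x (basis_vec j) = x j.
Proof. exact: sum_mul_delta. Qed.

Lemma nonneg_unit_basis (j : 'I_d) : nonneg_unit (basis_vec j).
Proof. by split=> [i|]; rewrite ?dot_basisr /basis_vec ?eqxx ?ler0n. Qed.

End Basis.

Lemma in_cone_basis (R : realType) (m : nat) (x : vec R m.+1) :
  (forall i, 0 <= x i) -> in_cone (@basis_vec R m.+1) x.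
Proof.
move=> x_ge0; exists x; split=> // i.
by rewrite -[LHS](sum_mul_delta x i); apply: eq_bigr => j _; rewrite eq_sym.
Qed.

Section RandomDictatorship.
Variables (R : realType) (d n m : nat).
Variables (V : 'I_n.+1 -> vec R d) (C : 'I_m.+1 -> vec R d).
Variable rk : 'I_n.+1 -> {perm 'I_m.+1}.

Lemma RD_welfare_const (w : R) :
  (forall v, UW V C (top rk v) = w) -> RD_welfare V C rk = w.
Proof.
move=> UW_top; rewrite /RD_welfare (eq_bigr _ (fun v _ => UW_top v)).
by rewrite sumr_const card_ord -[w *+ _]mulr_natr mulfK ?pnatr_eq0.
Qed.

Lemma UW_le_RD_distortion (c : 'I_m.+1) :
  0 < RD_welfare V C rk -> UW V C c / RD_welfare V C rk <= RD_distortion V C rk.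
Proof. by move=> RD_gt0; rewrite ler_pM2r ?invr_gt0 //; apply: le_bigmax. Qed.

End RandomDictatorship.

Section HardInstance.
Variables (R : realType) (n : nat).

Definition favourite (v : 'I_n.+1) : 'I_n.+2 := lift ord0 v.

Lemma favourite_neq0 (v : 'I_n.+1) : (favourite v == ord0) = false.
Proof. by []. Qed.

Definition hard_voter (v : 'I_n.+1) : vec R n.+2 :=
  fun i => 3/5 * (i == ord0)%:R + 4/5 * (i == favourite v)%:R.

Definition hard_candidate : 'I_n.+2 -> vec R n.+2 := @basis_vec R n.+2.

Definition hard_ranking (v : 'I_n.+1) : {perm 'I_n.+2} :=
  (tperm ord0 (favourite v) * tperm (lift ord0 ord0) (favourite v))%g.

Lemma hard_ranking_favourite v : hard_ranking v (favourite v) = ord0.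
Proof. by rewrite permM tpermR tpermD // eq_sym. Qed.

Lemma hard_ranking_ord0 v : hard_ranking v ord0 = lift ord0 ord0.
Proof. by rewrite permM tpermL tpermR. Qed.

Lemma top_hard_ranking v : top hard_ranking v = favourite v.
Proof. by rewrite /top -(hard_ranking_favourite v) permK. Qed.

Lemma hard_voter_favourite v : hard_voter v (favourite v) = 4/5.
Proof. by rewrite /hard_voter eqxx favourite_neq0 mulr0 add0r mulr1. Qed.

Lemma hard_voter_ord0 v : hard_voter v ord0 = 3/5.
Proof. by rewrite /hard_voter eqxx eq_sym favourite_neq0 mulr0 addr0 mulr1. Qed.

Lemma hard_voter_other v i :
  i != ord0 -> i != favourite v -> hard_voter v i = 0.
Proof. by move=> /negbTE i0 /negbTE iv; rewrite /hard_voter i0 iv !mulr0 addr0. Qed.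

Lemma hard_voter_ge0 v i : 0 <= hard_voter v i.
Proof. by apply: addr_ge0; apply: mulr_ge0; rewrite ?ler0n ?divr_ge0. Qed.

Lemma dot_hard_voter v : dot (hard_voter v) (hard_voter v) = 1.
Proof.
rewrite /dot (bigD1 ord0) //= (bigD1 (favourite v)) //=.
rewrite big1 => [|i /andP[i0 iv]]; last by rewrite hard_voter_other ?mulr0.
by rewrite hard_voter_ord0 hard_voter_favourite; field.
Qed.

Lemma hard_ranking_consistent v c c' :
  (hard_ranking v c < hard_ranking v c')%N ->
  dot (hard_voter v) (hard_candidate c') <= dot (hard_voter v) (hard_candidate c).
Proof.
rewrite !dot_basisr.
have [->|c'v] := eqVneq c' (favourite v); first by rewrite hard_ranking_favourite.
have [->|c'0] := eqVneq c' ord0; last by rewrite hard_voter_other ?hard_voter_ge0.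
rewrite hard_ranking_ord0 ltnS leqn0 => /eqP rk_c.
have -> : c = favourite v.
  by apply: (@perm_inj _ (hard_ranking v)); apply/val_inj; rewrite hard_ranking_favourite.
by rewrite hard_voter_ord0 hard_voter_favourite; lra.
Qed.

Lemma hard_instance_valid : valid_instance hard_voter hard_candidate hard_ranking.
Proof.
split; [|split; [|split]].
- by move=> v; split; [exact: hard_voter_ge0 | exact: dot_hard_voter].
- exact: nonneg_unit_basis.
- by move=> v; apply: in_cone_basis; exact: hard_voter_ge0.
- exact: hard_ranking_consistent.
Qed.

Lemma UW_hard_favourite v : UW hard_voter hard_candidate (favourite v) = 4/5.
Proof.
rewrite /UW (bigD1 v) //= dot_basisr hard_voter_favourite big1 ?addr0 // => w wv.
rewrite dot_basisr hard_voter_other //.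
by rewrite (inj_eq (@lift_inj _ ord0)) eq_sym.
Qed.

Lemma UW_hard_ord0 : UW hard_voter hard_candidate ord0 = n.+1%:R * (3/5).
Proof.
rewrite /UW; under eq_bigr do rewrite dot_basisr hard_voter_ord0.
by rewrite sumr_const card_ord [RHS]mulr_natl.
Qed.

Lemma RD_welfare_hard : RD_welfare hard_voter hard_candidate hard_ranking = 4/5.
Proof.
by apply: RD_welfare_const => v; rewrite top_hard_ranking UW_hard_favourite.
Qed.

Lemma RD_distortion_hard :
  n.+1%:R * (3/4) <= RD_distortion hard_voter hard_candidate hard_ranking.
Proof.
have -> : n.+1%:R * (3/4) =
    UW hard_voter hard_candidate ord0 / RD_welfare hard_voter hard_candidate hard_ranking.
  by rewrite RD_welfare_hard UW_hard_ord0; field.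
by apply: UW_le_RD_distortion; rewrite RD_welfare_hard divr_gt0.
Qed.

End HardInstance.

Theorem mainTheorem12 (R : realType) :
  exists c : R, 0 < c /\ exists d0 : nat, forall d : nat, (d0 <= d)%N ->
    forall B : R, B < c * d%:R ->
      exists (n m : nat) (V : 'I_n.+1 -> vec R d) (C : 'I_m.+1 -> vec R d)
             (rk : 'I_n.+1 -> {perm 'I_m.+1}),
        valid_instance V C rk /\ B < RD_distortion V C rk.
Proof.
exists (1/4); split; first by rewrite divr_gt0.
exists 2%N => -[|[|n]] // _ B B_lt.
exists n, n.+1, (@hard_voter R n), (@hard_candidate R n), (@hard_ranking n).
split; first exact: hard_instance_valid.
apply: (lt_le_trans B_lt); apply: le_trans (@RD_distortion_hard R n).
rewrite -[n.+2%:R]natr1; have : (1 : R) <= n.+1%:R by rewrite ler1n.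
move: (n.+1%:R : R) => x; lra.
Qed.
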